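(* For every $\varepsilon\in[0,1]$, $$\min_{P,Q:\ d_{\mathrm{TV}}(P,Q)=\varepsilon}\overline{C}(P,Q)=2\,d\!\left(\tfrac{1-\varepsilon}{2}\,\Big\|\,\tfrac12\right)=(1+\varepsilon)\log(1+\varepsilon)+(1-\varepsilon)\log(1-\varepsilon),$$ where the minimum is over pairs of probability distributions on a common countable set, and it is achieved by $P=\left(\frac{1-\varepsilon}{2},\frac{1+\varepsilon}{2}\right)$, $Q=\left(\frac{1+\varepsilon}{2},\frac{1-\varepsilon}{2}\right)$.
   Context: $d_{\mathrm{TV}}(P,Q)=\frac12\sum_x |P(x)-Q(x)|$. The relative entropy is $D(P\|Q)=\sum_x P(x)\log\frac{P(x)}{Q(x)}$. The capacitory discrimination (Jensen–Shannon divergence) is $\overline{C}(P,Q)=D\!\left(P\,\|\,\frac{P+Q}{2}\right)+D\!\left(Q\,\|\,\frac{P+Q}{2}\right)$. For $p,q\in[0,1]$, $d(p\|q)=p\log\frac pq+(1-p)\log\frac{1-p}{1-q}$ is the binary relative entropy, with $0\log 0=0$. Logarithms are natural. *)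

From Stdlib Require Import Reals Lra.
Open Scope R_scope.

Definition plogq (p q : R) : R :=
  if Req_EM_T p 0 then 0 else p * ln (p / q).

Definition xlnx (x : R) : R := if Req_EM_T x 0 then 0 else x * ln x.

Definition bin_relent (p q : R) : R := plogq p q + plogq (1 - p) (1 - q).

Definition is_distr (P : nat -> R) : Prop :=
  (forall x, 0 <= P x) /\ infinite_sum P 1.

Definition dTV_is (P Q : nat -> R) (t : R) : Prop :=
  infinite_sum (fun x => Rabs (P x - Q x) / 2) t.

Definition relent_is (P Q : nat -> R) (d : R) : Prop :=
  infinite_sum (fun x => plogq (P x) (Q x)) d.

Definition mid (P Q : nat -> R) : nat -> R := fun x => (P x + Q x) / 2.

Definition capdisc_is (P Q : nat -> R) (c : R) : Prop :=
  exists d1 d2, relent_is P (mid P Q) d1 /\ relent_is Q (mid P Q) d2 /\ c = d1 + d2.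

Definition P0 (eps : R) : nat -> R := fun x =>
  match x with 0%nat => (1 - eps) / 2 | 1%nat => (1 + eps) / 2 | _ => 0 end.
Definition Q0 (eps : R) : nat -> R := fun x =>
  match x with 0%nat => (1 + eps) / 2 | 1%nat => (1 - eps) / 2 | _ => 0 end.

From Stdlib Require Import Reals Lra Lia.
From Coquelicot Require Import Coquelicot.
Open Scope R_scope.

(* Gibbs' inequality in the form [x ln (x/m) >= x ln c + x - c m] (any [c > 0])
   is applied, at each point, with [c = 1 + eps] to the larger and [c = 1 - eps]
   to the smaller of [P x], [Q x].  This bounds the summand of the capacitory
   discrimination below by an affine function of [m = (P x + Q x)/2] and
   [|P x - Q x|/2].  Summing, the [|P - Q|/2] part totals [eps = eps * sum m], so
   its coefficient [ln (1 + eps) - ln (1 - eps)] drops out and what remains is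
   [(1 + eps) ln (1 + eps) + (1 - eps) ln (1 - eps)].  For [eps = 1] the
   supports are disjoint and every summand equals [2 ln 2 * m]. *)

Lemma ln_le_sub_1 y : 0 < y -> ln y <= y - 1.
Proof. intros Hy. pose proof (exp_ineq1_le (ln y)) as H. rewrite exp_ln in H; lra. Qed.

Lemma ln_div x y : 0 < x -> 0 < y -> ln (x / y) = ln x - ln y.
Proof.
  intros Hx Hy. unfold Rdiv. rewrite ln_mult, ln_Rinv; try lra.
  now apply Rinv_0_lt_compat.
Qed.

Lemma plogq_0 q : plogq 0 q = 0.
Proof. unfold plogq. destruct (Req_EM_T 0 0); lra. Qed.

Lemma plogq_pos p q : 0 < p -> plogq p q = p * ln (p / q).
Proof. intros Hp. unfold plogq. destruct (Req_EM_T p 0); lra. Qed.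

Lemma xlnx_0 : xlnx 0 = 0.
Proof. unfold xlnx. destruct (Req_EM_T 0 0); lra. Qed.

Lemma xlnx_pos x : 0 < x -> xlnx x = x * ln x.
Proof. intros Hx. unfold xlnx. destruct (Req_EM_T x 0); lra. Qed.

Lemma plogq_ge_gibbs p m c : 0 <= p -> 0 < m -> 0 < c ->
  p * ln c + p - c * m <= plogq p m.
Proof.
  intros Hp Hm Hc. destruct (Req_dec p 0) as [-> | Hp0].
  { rewrite plogq_0. assert (0 < c * m) by (apply Rmult_lt_0_compat; lra). lra. }
  rewrite plogq_pos by lra.
  assert (Hcm : 0 < c * m) by (apply Rmult_lt_0_compat; lra).
  assert (Hln : ln (c * m / p) <= c * m / p - 1) by (apply ln_le_sub_1, Rdiv_lt_0_compat; lra).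
  rewrite ln_div, ln_mult in Hln by lra. rewrite ln_div by lra.
  apply Rmult_le_compat_l with (r := p) in Hln; [|lra].
  replace (p * (c * m / p - 1)) with (c * m - p) in Hln by (field; lra). lra.
Qed.

Lemma plogq_mid_le p q : 0 <= p -> 0 <= q -> plogq p ((p + q) / 2) <= p.
Proof.
  intros Hp Hq. destruct (Req_dec p 0) as [-> | Hp0]; [rewrite plogq_0; lra|].
  rewrite plogq_pos by lra.
  assert (Hpos : 0 < p / ((p + q) / 2)) by (apply Rdiv_lt_0_compat; lra).
  assert (Hle2 : p / ((p + q) / 2) <= 2).
  { replace (p / ((p + q) / 2)) with (2 - 2 * (q / (p + q))) by (field; lra).
    assert (0 <= q / (p + q)) by (apply Rdiv_le_0_compat; lra). lra. }
  pose proof (ln_le_sub_1 _ Hpos) as Hln.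
  assert (Hp' : 0 <= p) by lra.
  pose proof (Rmult_le_compat_l p (ln (p / ((p + q) / 2))) 1 Hp' ltac:(lra)). lra.
Qed.

Lemma plogq_mid_ge p q : 0 <= p -> 0 <= q -> p - (p + q) / 2 <= plogq p ((p + q) / 2).
Proof.
  intros Hp Hq. destruct (Req_dec (p + q) 0).
  - replace p with 0 by lra. rewrite plogq_0. lra.
  - pose proof (plogq_ge_gibbs p ((p + q) / 2) 1 Hp ltac:(lra) ltac:(lra)) as Hg.
    rewrite ln_1 in Hg. lra.
Qed.

Lemma Rabs_plogq_mid_le p q : 0 <= p -> 0 <= q ->
  Rabs (plogq p ((p + q) / 2)) <= p + Rabs (p - q) / 2.
Proof.
  intros Hp Hq. pose proof (plogq_mid_le p q Hp Hq). pose proof (plogq_mid_ge p q Hp Hq).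
  pose proof (Rle_abs (q - p)) as Hqp. rewrite Rabs_minus_sym in Hqp.
  pose proof (Rabs_pos (p - q)). apply Rabs_le; lra.
Qed.

Lemma plogq_half x : 0 <= x -> plogq (x / 2) (1 / 2) = xlnx x / 2.
Proof.
  intros Hx. destruct (Req_dec x 0) as [-> | Hx0].
  - replace (0 / 2) with 0 by field. rewrite plogq_0, xlnx_0. field.
  - rewrite plogq_pos, xlnx_pos by lra.
    replace (x / 2 / (1 / 2)) with x by field. field.
Qed.

Lemma bin_relent_half eps : 0 <= eps <= 1 ->
  2 * bin_relent ((1 - eps) / 2) (1 / 2) = xlnx (1 + eps) + xlnx (1 - eps).
Proof.
  intros He. unfold bin_relent.
  replace (1 - (1 - eps) / 2) with ((1 + eps) / 2) by field.
  replace (1 - 1 / 2) with (1 / 2) by field.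
  rewrite !plogq_half by lra. field.
Qed.

Lemma plogq_mid_sum_ge p q eps : 0 <= p -> 0 <= q -> 0 <= eps < 1 ->
  (p + q) / 2 * (xlnx (1 + eps) + xlnx (1 - eps))
  + (ln (1 + eps) - ln (1 - eps)) * (Rabs (p - q) / 2 - eps * ((p + q) / 2))
  <= plogq p ((p + q) / 2) + plogq q ((p + q) / 2).
Proof.
  intros Hp Hq He. rewrite !xlnx_pos by lra.
  destruct (Req_dec (p + q) 0).
  { replace p with 0 by lra. replace q with 0 by lra.
    rewrite plogq_0, Rminus_0_r, Rabs_R0. replace ((0 + 0) / 2) with 0 by field. lra. }
  assert (Hm : 0 < (p + q) / 2) by lra.
  destruct (Rle_dec q p) as [Hqp|Hpq].
  - pose proof (plogq_ge_gibbs p _ (1 + eps) Hp Hm ltac:(lra)) as Hpg.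
    pose proof (plogq_ge_gibbs q _ (1 - eps) Hq Hm ltac:(lra)) as Hqg.
    rewrite Rabs_right by lra.
    set (a := ln (1 + eps)) in *. set (b := ln (1 - eps)) in *.
    replace ((p + q) / 2 * ((1 + eps) * a + (1 - eps) * b)
             + (a - b) * ((p - q) / 2 - eps * ((p + q) / 2)))
      with (p * a + q * b) by field. lra.
  - pose proof (plogq_ge_gibbs p _ (1 - eps) Hp Hm ltac:(lra)) as Hpg.
    pose proof (plogq_ge_gibbs q _ (1 + eps) Hq Hm ltac:(lra)) as Hqg.
    rewrite Rabs_left by lra.
    set (a := ln (1 + eps)) in *. set (b := ln (1 - eps)) in *.
    replace ((p + q) / 2 * ((1 + eps) * a + (1 - eps) * b)
             + (a - b) * (- (p - q) / 2 - eps * ((p + q) / 2)))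
      with (p * b + q * a) by field. lra.
Qed.

Lemma plogq_mid_sum_disjoint p q : 0 <= p -> 0 <= q -> p = 0 \/ q = 0 ->
  plogq p ((p + q) / 2) + plogq q ((p + q) / 2) = (p + q) / 2 * (xlnx (1 + 1) + xlnx (1 - 1)).
Proof.
  intros Hp Hq Hpq. rewrite Rminus_diag, xlnx_0, xlnx_pos by lra.
  assert (Hone : forall r, 0 <= r -> plogq r (r / 2) = r / 2 * ((1 + 1) * ln (1 + 1))).
  { intros r Hr. destruct (Req_dec r 0) as [-> | Hr0].
    - rewrite plogq_0. field.
    - rewrite plogq_pos by lra. replace (r / (r / 2)) with (1 + 1) by (field; lra). field. }
  destruct Hpq as [-> | ->]; rewrite plogq_0.
  - rewrite !Rplus_0_l, Hone by lra. ring.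
  - rewrite !Rplus_0_r, Hone by lra. ring.
Qed.

Lemma infinite_sum_plus a b la lb : infinite_sum a la -> infinite_sum b lb ->
  infinite_sum (fun n => a n + b n) (la + lb).
Proof.
  intros Ha Hb. apply is_series_Reals. apply is_series_Reals in Ha, Hb.
  exact (is_series_plus _ _ _ _ Ha Hb).
Qed.

Lemma infinite_sum_scal c a la : infinite_sum a la -> infinite_sum (fun n => c * a n) (c * la).
Proof.
  intros Ha. apply is_series_Reals. apply is_series_Reals in Ha.
  exact (is_series_scal c _ _ Ha).
Qed.

Lemma infinite_sum_ext a b l : (forall n, a n = b n) -> infinite_sum a l -> infinite_sum b l.
Proof.
  intros Hab Ha. apply is_series_Reals. apply is_series_Reals in Ha.
  exact (is_series_ext _ _ _ Hab Ha).
Qed.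

Lemma infinite_sum_le a b la lb : (forall n, a n <= b n) ->
  infinite_sum a la -> infinite_sum b lb -> la <= lb.
Proof.
  intros Hab Ha Hb. apply Rle_cv_lim with (sum_f_R0 a) (sum_f_R0 b); auto.
  intro n. apply sum_Rle. auto.
Qed.

Lemma infinite_sum_term_le a l : (forall n, 0 <= a n) -> infinite_sum a l -> forall n, a n <= l.
Proof.
  intros Ha Hl n. apply Rle_trans with (sum_f_R0 a n).
  - destruct n as [|n]; simpl; [lra|].
    pose proof (cond_pos_sum a n Ha). pose proof (Ha (S n)). lra.
  - apply growing_ineq; auto. intro k. simpl. pose proof (Ha (S k)). lra.
Qed.

Lemma infinite_sum_two_points f : (forall n, (2 <= n)%nat -> f n = 0) ->
  infinite_sum f (f 0%nat + f 1%nat).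
Proof.
  intros Hf.
  assert (Hpartial : forall n, (1 <= n)%nat -> sum_f_R0 f n = f 0%nat + f 1%nat).
  { induction n as [|[|n] IH]; intros Hn; [lia|reflexivity|].
    change (sum_f_R0 f (S (S n))) with (sum_f_R0 f (S n) + f (S (S n))).
    rewrite IH, (Hf (S (S n))) by lia. ring. }
  intros e He. exists 1%nat. intros n Hn. rewrite Hpartial by lia.
  unfold Rdist. rewrite Rminus_diag, Rabs_R0. lra.
Qed.

Lemma mid_sum P Q : is_distr P -> is_distr Q -> infinite_sum (mid P Q) 1.
Proof.
  intros [_ HP] [_ HQ].
  pose proof (infinite_sum_scal (/ 2) _ _ (infinite_sum_plus _ _ _ _ HP HQ)) as H.
  replace 1 with (/ 2 * (1 + 1)) by field.
  revert H. apply infinite_sum_ext. intro n. unfold mid. field.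
Qed.

Lemma dTV_sym P Q t : dTV_is P Q t -> dTV_is Q P t.
Proof. apply infinite_sum_ext. intro n. now rewrite Rabs_minus_sym. Qed.

Lemma relent_mid_swap P Q d : relent_is Q (mid Q P) d -> relent_is Q (mid P Q) d.
Proof. apply infinite_sum_ext. intro n. unfold mid. now rewrite Rplus_comm. Qed.

(* The summand is dominated by [P x + |P x - Q x| / 2], whose sum is [1 + t]. *)
Lemma relent_mid_exists P Q t : is_distr P -> is_distr Q -> dTV_is P Q t ->
  exists d, relent_is P (mid P Q) d.
Proof.
  intros [HP0 HP] [HQ0 _] Ht.
  assert (Hex : ex_series (fun x => plogq (P x) (mid P Q x))).
  { apply (@ex_series_le R_AbsRing R_CompleteNormedModule)
      with (b := fun n => P n + Rabs (P n - Q n) / 2).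
    - intro n. now apply Rabs_plogq_mid_le.
    - exists (1 + t). apply is_series_Reals, infinite_sum_plus; assumption. }
  exists (Series (fun x => plogq (P x) (mid P Q x))).
  now apply is_series_Reals, Series_correct.
Qed.

(* [mid P Q x - |P x - Q x| / 2 = min (P x) (Q x)] is nonnegative and sums to [1 - 1]. *)
Lemma dTV_one_disjoint P Q : is_distr P -> is_distr Q -> dTV_is P Q 1 ->
  forall n, P n = 0 \/ Q n = 0.
Proof.
  intros HP HQ Ht n.
  assert (Hgap : infinite_sum (fun n => mid P Q n + - (Rabs (P n - Q n) / 2)) (1 + -1 * 1)).
  { apply infinite_sum_plus; [now apply mid_sum|].
    apply infinite_sum_scal with (c := -1) in Ht. revert Ht. apply infinite_sum_ext. intro k. ring. }
  destruct HP as [HP0 _], HQ as [HQ0 _].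
  assert (Hnn : forall k, 0 <= mid P Q k + - (Rabs (P k - Q k) / 2)).
  { intro k. unfold mid. pose proof (HP0 k). pose proof (HQ0 k).
    destruct (Rcase_abs (P k - Q k)); [rewrite Rabs_left|rewrite Rabs_right]; lra. }
  pose proof (infinite_sum_term_le _ _ Hnn Hgap n) as Hle. unfold mid in Hle.
  pose proof (HP0 n). pose proof (HQ0 n).
  destruct (Rcase_abs (P n - Q n)); [rewrite Rabs_left in Hle|rewrite Rabs_right in Hle]; lra.
Qed.

Section LowerBound.

Variables (P Q : nat -> R) (eps d1 d2 : R).
Hypotheses (HP : is_distr P) (HQ : is_distr Q) (Ht : dTV_is P Q eps)
  (H1 : relent_is P (mid P Q) d1) (H2 : relent_is Q (mid P Q) d2).

Let capdisc_sum : infinite_sum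
  (fun n => plogq (P n) ((P n + Q n) / 2) + plogq (Q n) ((P n + Q n) / 2)) (d1 + d2).
Proof. exact (infinite_sum_plus _ _ _ _ H1 H2). Qed.

Lemma capdisc_lower_bound_lt1 : 0 <= eps < 1 -> xlnx (1 + eps) + xlnx (1 - eps) <= d1 + d2.
Proof.
  intros He. destruct HP as [HP0 _], HQ as [HQ0 _].
  set (K := xlnx (1 + eps) + xlnx (1 - eps)).
  set (L := ln (1 + eps) - ln (1 - eps)).
  pose proof (infinite_sum_scal K _ _ (mid_sum P Q HP HQ)) as Hm.
  pose proof (infinite_sum_scal L _ _
    (infinite_sum_plus _ _ _ _ Ht (infinite_sum_scal (- eps) _ _ (mid_sum P Q HP HQ)))) as Hd.
  replace K with (K * 1 + L * (eps + - eps * 1)) by ring.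
  refine (infinite_sum_le _ _ _ _ _ (infinite_sum_plus _ _ _ _ Hm Hd) capdisc_sum).
  intro n. unfold mid. rewrite Rmult_comm.
  replace (- eps * ((P n + Q n) / 2)) with (- (eps * ((P n + Q n) / 2))) by ring.
  now apply plogq_mid_sum_ge.
Qed.

Lemma capdisc_lower_bound_1 : eps = 1 -> xlnx (1 + eps) + xlnx (1 - eps) <= d1 + d2.
Proof.
  intros ->. pose proof (dTV_one_disjoint P Q HP HQ Ht) as Hdisj.
  destruct HP as [HP0 _], HQ as [HQ0 _].
  rewrite <- (Rmult_1_r (_ + _)).
  refine (infinite_sum_le _ _ _ _ _ (infinite_sum_scal _ _ _ (mid_sum P Q HP HQ)) capdisc_sum).
  intro n. unfold mid. rewrite plogq_mid_sum_disjoint by auto. lra.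
Qed.

End LowerBound.

Lemma P0_distr eps : 0 <= eps <= 1 -> is_distr (P0 eps).
Proof.
  intros He. split; [intros [|[|n]]; simpl; lra|].
  replace 1 with (P0 eps 0 + P0 eps 1) by (simpl; field).
  apply infinite_sum_two_points. intros [|[|n]] Hn; [lia|lia|reflexivity].
Qed.

Lemma Q0_distr eps : 0 <= eps <= 1 -> is_distr (Q0 eps).
Proof.
  intros He. split; [intros [|[|n]]; simpl; lra|].
  replace 1 with (Q0 eps 0 + Q0 eps 1) by (simpl; field).
  apply infinite_sum_two_points. intros [|[|n]] Hn; [lia|lia|reflexivity].
Qed.

Lemma P0_Q0_dTV eps : 0 <= eps -> dTV_is (P0 eps) (Q0 eps) eps.
Proof.
  intros He.
  assert (Hval : Rabs (P0 eps 0 - Q0 eps 0) / 2 + Rabs (P0 eps 1 - Q0 eps 1) / 2 = eps).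
  { simpl. replace ((1 - eps) / 2 - (1 + eps) / 2) with (- eps) by field.
    replace ((1 + eps) / 2 - (1 - eps) / 2) with eps by field.
    rewrite Rabs_Ropp, Rabs_right by lra. field. }
  rewrite <- Hval at 3.
  apply infinite_sum_two_points. intros [|[|n]] Hn; [lia|lia|].
  simpl. rewrite Rminus_diag, Rabs_R0. field.
Qed.

Lemma P0_Q0_capdisc eps :
  capdisc_is (P0 eps) (Q0 eps) (2 * bin_relent ((1 - eps) / 2) (1 / 2)).
Proof.
  set (M := mid (P0 eps) (Q0 eps)).
  assert (HM0 : M 0%nat = 1 / 2) by (unfold M, mid; simpl; field).
  assert (HM1 : M 1%nat = 1 / 2) by (unfold M, mid; simpl; field).
  exists (plogq (P0 eps 0) (M 0%nat) + plogq (P0 eps 1) (M 1%nat)),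
         (plogq (Q0 eps 0) (M 0%nat) + plogq (Q0 eps 1) (M 1%nat)).
  split; [|split].
  - apply (infinite_sum_two_points (fun x => plogq (P0 eps x) (M x))).
    intros [|[|n]] Hn; [lia|lia|apply plogq_0].
  - apply (infinite_sum_two_points (fun x => plogq (Q0 eps x) (M x))).
    intros [|[|n]] Hn; [lia|lia|apply plogq_0].
  - unfold bin_relent. rewrite HM0, HM1. simpl.
    replace (1 - (1 - eps) / 2) with ((1 + eps) / 2) by field.
    replace (1 - 1 / 2) with (1 / 2) by field. ring.
Qed.

Theorem proposition3 (eps : R) (Heps : 0 <= eps <= 1) :
  (forall P Q : nat -> R, is_distr P -> is_distr Q -> dTV_is P Q eps ->
     exists c, capdisc_is P Q c /\ 2 * bin_relent ((1 - eps) / 2) (1 / 2) <= c)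
  /\ (is_distr (P0 eps) /\ is_distr (Q0 eps) /\ dTV_is (P0 eps) (Q0 eps) eps /\
      capdisc_is (P0 eps) (Q0 eps) (2 * bin_relent ((1 - eps) / 2) (1 / 2)))
  /\ 2 * bin_relent ((1 - eps) / 2) (1 / 2) = xlnx (1 + eps) + xlnx (1 - eps).
Proof.
  split; [|split].
  - intros P Q HP HQ Ht.
    destruct (relent_mid_exists P Q eps HP HQ Ht) as [d1 H1].
    destruct (relent_mid_exists Q P eps HQ HP (dTV_sym _ _ _ Ht)) as [d2 H2].
    apply relent_mid_swap in H2.
    exists (d1 + d2). split; [now exists d1, d2|].
    rewrite bin_relent_half by assumption.
    destruct (Req_dec eps 1) as [E|Hlt].
    + exact (capdisc_lower_bound_1 P Q eps d1 d2 HP HQ Ht H1 H2 E).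
    + apply (capdisc_lower_bound_lt1 P Q eps d1 d2 HP HQ Ht H1 H2). lra.
  - split; [now apply P0_distr|split; [now apply Q0_distr|split]].
    + apply P0_Q0_dTV; lra.
    + apply P0_Q0_capdisc.
  - now apply bin_relent_half.
Qed.
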